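(* In the setting described in the context, there exists an integer matrix $B = \begin{pmatrix} a_1 & b_1 \\ a_2 & b_2 \end{pmatrix} \in \mathbb{Z}^{2\times 2}$ such that $\rho_1^{a_1}\rho_2^{a_2} = \mathbf{1} = \rho_1^{b_1}\rho_2^{b_2}$ and $\det(B) = n$. Such a matrix is unique up to right multiplication by $\mathrm{SL}_2(\mathbb{Z})$.
   Context: Let $\Bbbk$ be algebraically closed of characteristic $0$, $R=\Bbbk[X_1,X_2,X_3]$, and $G\le \mathrm{SL}_3(\Bbbk)$ a finite abelian group of order $n$ acting on $R$ by linear change of variables, such that the skew-group algebra $R\ast G$ admits a higher preprojective grading (standing assumption). Decompose the natural representation of $G$ on $\Bbbk^3$ as $\rho=\rho_1\oplus\rho_2\oplus\rho_3$ into one-dimensional characters; these are elements of the character group $\hat G=\mathrm{Hom}(G,\Bbbk^* )$ (with multiplication of characters), and $\mathbf{1}$ denotes the trivial character. *)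

From HB Require Import structures.
From mathcomp Require Import all_boot all_order all_algebra all_fingroup all_solvable mxrepresentation.
Set Implicit Arguments. Unset Strict Implicit. Unset Printing Implicit Defensive.
Import GRing.Theory Num.Theory.
Local Open Scope ring_scope.

Definition lin_char (F : fieldType) (gT : finGroupType) (G : {set gT})
  (rho : gT -> F) : Prop :=
  {in G &, forall x y, rho (x * y)%g = rho x * rho y} /\ {in G, forall x, rho x != 0}.

Definition diag3 (F : fieldType) (a b c : F) : 'M[F]_3 :=
  diag_mx (\row_(i < 3) nth 0 [:: a; b; c] i).

Definition col_kills (F : fieldType) (gT : finGroupType) (G : {set gT})
  (rho1 rho2 : gT -> F) (B : 'M[int]_2) : Prop :=
  forall j : 'I_2, {in G, forall g, rho1 g ^ (B 0 j) * rho2 g ^ (B 1 j) = 1}.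

From HB Require Import structures.
From mathcomp Require Import all_boot all_order all_algebra all_fingroup all_solvable mxrepresentation.
From mathcomp Require Import zify ring boolp.
Set Implicit Arguments.
Unset Strict Implicit.
Unset Printing Implicit Defensive.
Import GRing.Theory Num.Theory.
Local Open Scope ring_scope.

(* Since det (rG g) = 1, rho3 = (rho1 rho2)^-1, so by faithfulness g is determined by
   (rho1 g, rho2 g).  The lattice of pairs (x, y) with rho1^x rho2^y = 1 on G has a Hermite
   basis (a, t), (0, c), obtained by minimizing a and c.  The characters rho1^i rho2^j with
   (i, j) in the box [0, a) x [0, c) are pairwise distinct, so the orthogonality relations over
   G give a c <= |G|; since they separate the points of G, the dual relations over the box give
   |G| <= a c.  Every B whose columns lie in the lattice is [[a, 0], [t, c]] M with M integral,
   and det B = |G| = a c forces det M = 1. *)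

Lemma card_le_of_biorthogonal (F : fieldType) (I J : finType) (A : {pred I}) (B : {pred J})
    (f : I -> J -> F) (f' : J -> I -> F) (k : F) : k != 0 ->
  {in A &, forall i i', \sum_(j in B) f i j * f' j i' = (i == i')%:R * k} ->
  (#|A| <= #|B|)%N.
Proof.
move=> k_neq0 orth.
pose M : 'M[F]_(#|A|, #|B|) := \matrix_(i, j) f (enum_val i) (enum_val j).
pose M' : 'M[F]_(#|B|, #|A|) := \matrix_(j, i) f' (enum_val j) (enum_val i).
have MM' : M *m M' = k%:M.
  apply/matrixP=> i i'; rewrite !mxE.
  under eq_bigr do rewrite !mxE.
  rewrite -(big_enum_val (fun j => f (enum_val i) j * f' j (enum_val i'))).
  by rewrite orth ?enum_valP // (inj_eq enum_val_inj) mulr_natl.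
have <- : \rank (k%:M : 'M[F]_#|A|) = #|A|.
  by apply: mxrank_unit; rewrite unitmxE det_scalar unitfE expf_neq0.
by rewrite -MM'; apply: leq_trans (mxrankM_maxl _ _) (rank_leq_col _).
Qed.

Lemma sum_expr_unity (F : fieldType) (v : F) n :
  v ^+ n = 1 -> \sum_(i < n) v ^+ i = (v == 1)%:R * n%:R.
Proof.
move=> vn1; have [->|v_neq1] := eqVneq v 1.
  by rewrite mul1r (eq_bigr (fun=> 1)) ?sumr_const ?card_ord // => i; rewrite expr1n.
have := subrX1 v n; rewrite vn1 subrr mul0r => /esym/eqP.
by rewrite mulf_eq0 subr_eq0 (negbTE v_neq1) => /eqP.
Qed.

Lemma modz_eq0_if_ge (m : int) (d : nat) :
  (0 < d)%N -> (0 < (m %% d)%Z -> d%:Z <= (m %% d)%Z) -> (m %% d)%Z = 0.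
Proof.
move=> d_gt0 min_d; have := modz_ge0 m (d := d); have := ltz_pmod m (d := d).
by have [/min_d|] := ltrP 0 (m %% d)%Z; lia.
Qed.

Lemma unimodular_transition (R : idomainType) n (B0 M1 M2 : 'M[R]_n) : \det B0 != 0 ->
    \det (B0 *m M1) = \det B0 -> \det (B0 *m M2) = \det B0 ->
  exists M, \det M = 1 /\ B0 *m M2 = B0 *m M1 *m M.
Proof.
move=> detB0 detB0M1 detB0M2.
have det_unimodular (M0 : 'M_n) : \det (B0 *m M0) = \det B0 -> \det M0 = 1.
  by rewrite det_mulmx -{2}[\det B0]mulr1 => /(mulfI detB0).
have detM1 := det_unimodular _ detB0M1; have detM2 := det_unimodular _ detB0M2.
have M1_adj : M1 *m \adj M1 = 1%:M by rewrite mul_mx_adj detM1.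
exists (\adj M1 *m M2); split; last by rewrite -mulmxA (mulmxA M1) M1_adj mul1mx.
have := congr1 determinant (mulmxA M1 (\adj M1) M2).
by rewrite M1_adj mul1mx det_mulmx detM1 detM2 mul1r.
Qed.

Lemma det_diag3 (F : fieldType) (a b c : F) : \det (diag3 a b c) = a * b * c.
Proof. by rewrite /diag3 det_diag !big_ord_recr big_ord0 !mxE /= mul1r. Qed.

Section LinearCharacters.
Variables (F : fieldType) (gT : finGroupType) (G : {group gT}).
Implicit Types rho sigma : gT -> F.

Lemma lin_char_unit rho : lin_char G rho -> {in G, forall g, rho g \is a GRing.unit}.
Proof. by case=> _ rho_neq0 g Gg; rewrite unitfE rho_neq0. Qed.

Lemma lin_char1 rho : lin_char G rho -> rho 1%g = 1.
Proof.
case=> rhoM rho_neq0; apply: (mulIf (rho_neq0 _ (group1 G))).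
by rewrite mul1r -rhoM ?mulg1.
Qed.

Lemma lin_charX rho g n : lin_char G rho -> g \in G -> rho (g ^+ n)%g = rho g ^+ n.
Proof.
move=> rho_ch Gg; elim: n => [|n IHn]; first by rewrite expg0 expr0 lin_char1.
by rewrite expgS exprS rho_ch.1 ?groupX // IHn.
Qed.

Lemma lin_char_expr_card rho g : lin_char G rho -> g \in G -> rho g ^+ #|G| = 1.
Proof. by move=> rho_ch Gg; rewrite -lin_charX // expg_cardG // lin_char1. Qed.

Lemma lin_charM rho sigma :
  lin_char G rho -> lin_char G sigma -> lin_char G (fun g => rho g * sigma g).
Proof.
move=> [rhoM rho_neq0] [sigmaM sigma_neq0]; split=> [g h Gg Gh|g Gg].
  by rewrite rhoM // sigmaM // mulrACA.
by rewrite mulf_neq0 ?rho_neq0 ?sigma_neq0.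
Qed.

Lemma lin_charXz rho (z : int) : lin_char G rho -> lin_char G (fun g => rho g ^ z).
Proof.
move=> rho_ch; have rho_unit := lin_char_unit rho_ch.
split=> [g h Gg Gh|g Gg]; first by rewrite rho_ch.1 // exprzMl ?rho_unit.
by rewrite expfz_neq0 ?rho_ch.2.
Qed.

Lemma lin_char_sum_eq0 rho h :
  lin_char G rho -> h \in G -> rho h != 1 -> \sum_(g in G) rho g = 0.
Proof.
move=> rho_ch Gh rho_h_neq1.
have sum_rhoM : \sum_(g in G) rho g = rho h * \sum_(g in G) rho g.
  rewrite mulr_sumr (reindex_inj (mulgI h)) /=.
  rewrite (eq_bigl (mem G)) => [|g]; last by rewrite /= groupMl.
  by apply: eq_bigr => g Gg; rewrite rho_ch.1.
apply/eqP; move/eqP: sum_rhoM; rewrite -subr_eq0 -{1}[\sum_(g in G) _]mul1r -mulrBl.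
by rewrite mulf_eq0 subr_eq0 eq_sym (negbTE rho_h_neq1).
Qed.

End LinearCharacters.

Definition hermite_mx (a c : nat) (t : int) : 'M[int]_2 :=
  \matrix_(i, j) if i == 0 then (if j == 0 then a%:Z else 0) else (if j == 0 then t else c%:Z).

Lemma det_hermite_mx a c t : \det (hermite_mx a c t) = (a * c)%N%:Z.
Proof.
rewrite det_trig; last by apply/is_trig_mxP => -[[|[|//]] ?] [[|[|//]] ?] //=; rewrite mxE.
by rewrite !big_ord_recr big_ord0 /= !mxE /= mul1r.
Qed.

Section CharacterLattice.
Variables (F : fieldType) (gT : finGroupType) (G : {group gT}) (rho1 rho2 : gT -> F).
Hypotheses (ch1 : lin_char G rho1) (ch2 : lin_char G rho2).

Definition kills (x y : int) : Prop := {in G, forall g, rho1 g ^ x * rho2 g ^ y = 1}.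

Lemma kills_subMr x y x' y' k :
  kills x y -> kills x' y' -> kills (x - k * x') (y - k * y').
Proof.
move=> Kxy Kxy' g Gg; have u1 := lin_char_unit ch1 Gg; have u2 := lin_char_unit ch2 Gg.
rewrite !exprzDr // -!mulNr ![- k * _]mulrC -!exprz_exp mulrACA -exprzMl ?unitrXz //.
by rewrite Kxy // Kxy' // exp1rz mulr1.
Qed.

Lemma kills_card_l : kills #|G| 0.
Proof. by move=> g Gg; rewrite expr0z mulr1 -exprnP lin_char_expr_card. Qed.

Lemma kills_card_r : kills 0 #|G|.
Proof. by move=> g Gg; rewrite expr0z mul1r -exprnP lin_char_expr_card. Qed.

Record hermite_basis (a c : nat) (t : int) : Prop := HermiteBasis {
  hermite_a_gt0 : (0 < a)%N;
  hermite_c_gt0 : (0 < c)%N;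
  hermite_kills_a : kills a t;
  hermite_kills_c : kills 0 c;
  hermite_a_min : forall x y, 0 < x -> kills x y -> a%:Z <= x;
  hermite_c_min : forall y, 0 < y -> kills 0 y -> c%:Z <= y }.

Lemma hermite_basis_exists : exists a c t, hermite_basis a c t.
Proof.
have exA : exists n, (0 < n)%N && `[< exists y, kills n y >].
  by exists #|G|; rewrite cardG_gt0; apply/asboolP; exists 0; apply: kills_card_l.
have exC : exists n, (0 < n)%N && `[< kills 0 n >].
  by exists #|G|; rewrite cardG_gt0; apply/asboolP; apply: kills_card_r.
case: (ex_minnP exA) => a /andP[a_gt0 /asboolP[t Kat]] a_min.
case: (ex_minnP exC) => c /andP[c_gt0 /asboolP Kc] c_min.
exists a, c, t; split=> // [[] // x y + Kxy | [] // y + Ky]; rewrite ltz_nat lez_nat => pos.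
  by apply: a_min; rewrite pos; apply/asboolP; exists y.
by apply: c_min; rewrite pos; apply/asboolP.
Qed.

Section HermiteBasis.
Variables (a c : nat) (t : int).
Hypothesis hb : hermite_basis a c t.

Lemma hermite_decomp x y : kills x y -> exists q s : int, x = q * a /\ y = q * t + s * c.
Proof.
case: hb => a_gt0 c_gt0 Kat Kc a_min c_min Kxy.
set q := (x %/ a)%Z; have Kr : kills (x %% a)%Z (y - q * t) := kills_subMr q Kxy Kat.
have r0 : (x %% a)%Z = 0 by apply: modz_eq0_if_ge => // r_gt0; apply: a_min r_gt0 Kr.
rewrite r0 in Kr; set s := ((y - q * t) %/ c)%Z.
have Kr' : kills 0 ((y - q * t) %% c)%Z by move: (kills_subMr s Kr Kc); rewrite mulr0 subrr.
have r'0 : ((y - q * t) %% c)%Z = 0 by apply: modz_eq0_if_ge => // r_gt0; apply: c_min r_gt0 Kr'.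
exists q, s; split; first by rewrite {1}(divz_eq x a) r0 addr0.
by have := divz_eq (y - q * t) c; rewrite r'0 addr0 -/s; lia.
Qed.

Lemma hermite_box_eq (p p' : 'I_a * 'I_c) :
  kills (p.1%:Z - p'.1%:Z) (p.2%:Z - p'.2%:Z) -> p = p'.
Proof.
case: p p' => [i j] [i' j'] /hermite_decomp[q [s [/= e1 e2]]].
have := ltn_ord i; have := ltn_ord i'; have := ltn_ord j; have := ltn_ord j' => *.
have q0 : q = 0 by nia.
move: e1 e2; rewrite q0 !mul0r add0r => e1 e2.
have s0 : s = 0 by nia.
by rewrite s0 mul0r in e2; congr pair; apply: ord_inj; lia.
Qed.

Lemma col_kills_hermite_mx : col_kills G rho1 rho2 (hermite_mx a c t).
Proof.
case: hb => _ _ Kat Kc _ _ j g Gg.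
by case: j => -[|[|//]] ? ; rewrite !mxE /=; [apply: Kat | apply: Kc].
Qed.

Lemma col_kills_factor B : col_kills G rho1 rho2 B -> exists M, B = hermite_mx a c t *m M.
Proof.
move=> KB; have /fin_all_exists[qs qsP] (j : 'I_2) :
    exists qs : int * int, B 0 j = qs.1 * a /\ B 1 j = qs.1 * t + qs.2 * c.
  by have [q [s qsE]] := hermite_decomp (KB j); exists (q, s).
exists (\matrix_(i, j) if i == 0 then (qs j).1 else (qs j).2).
apply/matrixP => i j; rewrite !mxE !big_ord_recr big_ord0 /= !mxE /=.
have [B0j B1j] := qsP j.
have [-> | ->] : i = 0 \/ i = 1 by case: i => -[|[|//]] ?; [left | right]; apply: val_inj.
  by rewrite B0j /=; ring.
by rewrite B1j /=; ring.
Qed.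

Definition box_char (p : 'I_a * 'I_c) g := rho1 g ^+ p.1 * rho2 g ^+ p.2.

Lemma box_char_neq0 p g : g \in G -> box_char p g != 0.
Proof. by move=> Gg; rewrite mulf_neq0 // expf_neq0 // ?ch1.2 ?ch2.2. Qed.

Lemma sum_group_box_char p p' :
  \sum_(g in G) box_char p g / box_char p' g = (p == p')%:R * #|G|%:R.
Proof.
have [<-|p_neq] := eqVneq p p'.
  rewrite mul1r (eq_bigr (fun=> 1)) ?sumr_const // => g Gg.
  by rewrite divff ?box_char_neq0.
pose psi g := rho1 g ^ (p.1%:Z - p'.1%:Z) * rho2 g ^ (p.2%:Z - p'.2%:Z).
have psi_ch : lin_char G psi := lin_charM (lin_charXz _ ch1) (lin_charXz _ ch2).
rewrite mul0r (eq_bigr psi) => [|g Gg]; last first.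
  by rewrite /psi /box_char !expfzDr ?ch1.2 ?ch2.2 // -!invr_expz -!exprnP invfM mulrACA.
have /exists_inP[h Gh psi_h_neq1] : [exists h in G, psi h != 1].
  apply: contraT; rewrite negb_exists_in => /forall_inP psi1.
  by rewrite -(negbTE p_neq); apply/eqP/hermite_box_eq => g Gg; apply/eqP/negPn/psi1.
exact: lin_char_sum_eq0 psi_ch Gh psi_h_neq1.
Qed.

Hypothesis sep : {in G &, forall g h, rho1 g = rho1 h -> rho2 g = rho2 h -> g = h}.

Lemma sum_box_char g h : g \in G -> h \in G ->
  \sum_(p : 'I_a * 'I_c) box_char p g / box_char p h = (g == h)%:R * (a * c)%:R.
Proof.
move=> Gg Gh; case: hb => _ _ Kat Kc _ _.
have r1h_neq0 := ch1.2 h Gh; have r2h_neq0 := ch2.2 h Gh.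
set u := rho1 g / rho1 h; set v := rho2 g / rho2 h.
have -> : \sum_(p : 'I_a * 'I_c) box_char p g / box_char p h =
    (\sum_(i < a) u ^+ i) * \sum_(j < c) v ^+ j.
  rewrite big_distrlr pair_big /=; apply: eq_bigr => -[i j] _.
  by rewrite /box_char !expr_div_n invfM mulrACA.
have v_c : v ^+ c = 1.
  have := Kc g Gg; have := Kc h Gh; rewrite !expr0z !mul1r -!exprnP => r2h r2g.
  by rewrite expr_div_n r2g r2h divr1.
have u_a : v = 1 -> u ^+ a = 1.
  move=> /divr1_eq r2gh; have := Kat g Gg; have := Kat h Gh; rewrite r2gh => Kh Kg.
  have : rho1 g ^ a = rho1 h ^ a by apply: (mulIf (expfz_neq0 t r2h_neq0)); rewrite Kg Kh.
  by rewrite expr_div_n -!exprnP => ->; rewrite divff // expf_neq0.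
have uv1 : (u == 1) && (v == 1) = (g == h).
  apply/andP/eqP => [[/eqP/divr1_eq r1 /eqP/divr1_eq r2]|gh]; first exact: sep.
  by rewrite /u /v gh !divff.
rewrite -uv1 (sum_expr_unity v_c); have [/u_a u_a'|_] := eqVneq v 1.
  by rewrite (sum_expr_unity u_a') andbT mulr1n mul1r natrM mulrA.
by rewrite andbF !mul0r mulr0.
Qed.

Hypothesis charF0 : [pchar F] =i pred0.

Lemma hermite_index : (a * c)%N = #|G|.
Proof.
have natr_neq0 n : (0 < n)%N -> n%:R != 0 :> F.
  by move/pcharf0P: charF0 => char0; rewrite char0 -lt0n.
case: hb => a_gt0 c_gt0 _ _ _ _; apply/eqP; rewrite eqn_leq; apply/andP; split.
  have := card_le_of_biorthogonal (A := predT) (B := G) (k := #|G|%:R)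
    (f := box_char) (f' := fun g p => (box_char p g)^-1).
  rewrite card_prod !card_ord; apply; first by rewrite natr_neq0 ?cardG_gt0.
  by move=> p p' _ _; apply: sum_group_box_char.
have := card_le_of_biorthogonal (A := G) (B := predT) (k := (a * c)%:R)
  (f := fun g p => box_char p g) (f' := fun p h => (box_char p h)^-1).
rewrite card_prod !card_ord; apply; first by rewrite natr_neq0 ?muln_gt0 ?a_gt0.
by move=> g h Gg Gh; apply: sum_box_char.
Qed.

End HermiteBasis.

End CharacterLattice.

Lemma diag_chars_separate (F : fieldType) (gT : finGroupType) (G : {group gT})
    (rG : mx_representation F G 3) (rho1 rho2 rho3 : gT -> F) (P : 'M[F]_3) :
    mx_faithful rG -> {in G, forall g, \det (rG g) = 1} ->
    lin_char G rho1 -> lin_char G rho2 -> P \in unitmx ->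
    {in G, forall g, P *m rG g *m invmx P = diag3 (rho1 g) (rho2 g) (rho3 g)} ->
  {in G &, forall g h, rho1 g = rho1 h -> rho2 g = rho2 h -> g = h}.
Proof.
move=> faithG detG ch1 ch2 Punit decomp.
have detP_neq0 : \det P != 0 by rewrite -unitfE -unitmxE.
have rho123 g : g \in G -> rho1 g * rho2 g * rho3 g = 1.
  move=> Gg; rewrite -det_diag3 -decomp // !det_mulmx det_inv mulrAC divff //.
  by rewrite mul1r detG.
move=> g h Gg Gh r1 r2; have r3 : rho3 g = rho3 h.
  apply: (mulfI (mulf_neq0 (ch1.2 g Gg) (ch2.2 g Gg))).
  by rewrite rho123 // r1 r2 rho123.
apply: (mx_faithful_inj faithG Gg Gh).
have := decomp _ Gg; rewrite r1 r2 r3 -(decomp _ Gh).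
by move/(can_inj (mulmxKV Punit))/(can_inj (mulKmx Punit)).
Qed.

Unset Implicit Arguments.

Theorem proposition6p5
  (F : closedFieldType) (charF0 : [pchar F] =i pred0)
  (gT : finGroupType) (G : {group gT}) (abG : abelian G)
  (rG : mx_representation F G 3) (faithG : mx_faithful rG)
  (detG : {in G, forall g, \det (rG g) = 1})
  (rho1 rho2 rho3 : gT -> F)
  (ch1 : lin_char G rho1) (ch2 : lin_char G rho2) (ch3 : lin_char G rho3)
  (P : 'M[F]_3) (Punit : P \in unitmx)
  (decomp : {in G, forall g, P *m rG g *m invmx P = diag3 (rho1 g) (rho2 g) (rho3 g)}) :
  (exists B : 'M[int]_2, col_kills G rho1 rho2 B /\ \det B = (#|G|)%:Z) /\
  (forall B B' : 'M[int]_2,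
      col_kills G rho1 rho2 B -> \det B = (#|G|)%:Z ->
      col_kills G rho1 rho2 B' -> \det B' = (#|G|)%:Z ->
      exists M : 'M[int]_2, \det M = 1 /\ B' = B *m M).
Proof.
have sep := diag_chars_separate faithG detG ch1 ch2 Punit decomp.
have [a [c [t hb]]] := hermite_basis_exists ch1 ch2.
have detB0 : \det (hermite_mx a c t) = #|G|%:Z.
  by rewrite det_hermite_mx (hermite_index ch1 ch2 hb sep charF0).
split; first by exists (hermite_mx a c t); split; first exact: col_kills_hermite_mx.
move=> B B' KB dB KB' dB'.
have [M1 defB] := col_kills_factor ch1 ch2 hb KB.
have [M2 defB'] := col_kills_factor ch1 ch2 hb KB'.
subst B B'; apply: unimodular_transition; rewrite ?detB0 //.
by have := cardG_gt0 G; lia.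
Qed.
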